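(* Let $n\ge2$ and let $v_1,\dots,v_k$ and $u_1,\dots,u_k$ be two collections of $k\le n-1$ normalized vectors in $\mathbb C^n$ such that $\dim\mathrm{span}\{v_1,\dots,v_k\}\ge2$ and $\dim\mathrm{span}\{u_1,\dots,u_k\}\ge2$. Let $\mathcal V:=\{X\in M_n(\mathbb C):\ v_1^\ast Xu_1=\dots=v_k^\ast Xu_k=0\}$. Then $\mathcal V$ contains no rank-one matrix that is left-symmetric relative to $\mathcal V$.
   Context: $M_n(\mathbb C)$ carries the operator (spectral) norm. $A\perp B$ (Birkhoff–James orthogonality) means $\|A+\lambda B\|\ge\|A\|$ for all $\lambda\in\mathbb C$. For a subset $\mathcal S$, an element $A\in\mathcal S$ is left-symmetric relative to $\mathcal S$ if for every $B\in\mathcal S$, $A\perp B$ implies $B\perp A$. *)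

From HB Require Import structures.
From mathcomp Require Import all_boot all_order all_algebra.
From mathcomp Require Import classical_sets reals.
From mathcomp.real_closed Require Import complex.
Set Implicit Arguments. Unset Strict Implicit. Unset Printing Implicit Defensive.
Import Order.TTheory GRing.Theory Num.Theory.
Local Open Scope ring_scope.
Local Open Scope classical_set_scope.

Definition vnorm (R : realType) (n : nat) (x : 'cV[R[i]]_n) : R :=
  Num.sqrt (\sum_(j < n) ((complex.Re (x j 0)) ^+ 2 + (complex.Im (x j 0)) ^+ 2)).

Definition opnorm (R : realType) (n : nat) (A : 'M[R[i]]_n) : R :=
  sup [set vnorm (A *m x) | x in [set x : 'cV[R[i]]_n | vnorm x = 1]].

Definition BJ_orth (R : realType) (n : nat) (A B : 'M[R[i]]_n) : Prop :=
  forall lambda : R[i], opnorm A <= opnorm (A + lambda *: B).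

Definition left_symmetric_rel (R : realType) (n : nat)
    (S : set 'M[R[i]]_n) (A : 'M[R[i]]_n) : Prop :=
  S A /\ forall B, S B -> BJ_orth A B -> BJ_orth B A.

Definition sesq (R : realType) (n : nat) (v : 'cV[R[i]]_n) (X : 'M[R[i]]_n)
    (u : 'cV[R[i]]_n) : R[i] :=
  ((map_mx Num.conj v)^T *m X *m u) 0 0.

(* n x k matrix whose columns are the vectors w_1, ..., w_k;
   its rank is dim span {w_1, ..., w_k}. *)
Definition colmat (R : realType) (n k : nat) (w : 'I_k -> 'cV[R[i]]_n)
    : 'M[R[i]]_(n, k) := \matrix_(a < n, b < k) w b a 0.

Definition Vspace (R : realType) (n k : nat) (v u : 'I_k -> 'cV[R[i]]_n)
    : set 'M[R[i]]_n := [set X | forall j : 'I_k, sesq (v j) X (u j) = 0].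

From HB Require Import structures.
From mathcomp Require Import all_boot all_order all_algebra.
From mathcomp Require Import classical_sets reals.
From mathcomp.real_closed Require Import complex.
From mathcomp Require Import ring lra zify.
Import Order.TTheory GRing.Theory Num.Theory.
Local Open Scope ring_scope.
Local Open Scope sesquilinear_scope.

(* Write the rank-one matrix as A = kap x y^* with unit vectors x, y, so that
   A lies in V exactly when (v_j^* x) (y^* u_j) = 0 for all j.  It suffices to
   find unit vectors r _|_ x, s _|_ y and scalars al != 0, om > 0 with
   |al|^2 + om^2 = 1 such that C := [x r] U [y s]^* lies in V, where
   U = [[al^*, om], [om, -al]] is unitary.  Then B := C - (al^* / kap) A lies in
   V, and B y = om r _|_ x gives A _|_ B, whereas
   ||B + (al^* / kap) A|| = ||C|| <= 1 < ||B|| (evaluate B at om y - al^* s).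
   Such r and s exist by counting dimensions, as at most k <= n - 1 vectors
   have to be avoided.  If y^* u_a = 0 and v_b^* x = 0 for some a != b, take r
   orthogonal to x and to the v_j with j = b or y^* u_j != 0 (all of which
   annihilate x), and s orthogonal to y and to the remaining u_j (which
   annihilate y).  If y^* u_j != 0 for all j, then every v_j^* x vanishes and
   s, om, al come from Gram-Schmidt applied to some u_j not parallel to y,
   which exists as dim span {u_j} >= 2; the case v_j^* x != 0 for all j is
   symmetric. *)

Section InnerProduct.
Context {R : realType} {n : nat}.
Local Notation C := R[i].
Implicit Types (a b h w y : 'cV[C]_n) (c : C).

Definition dotc a b : C := (a ^t* *m b) 0 0.

Definition orthonormal a b := [/\ dotc a a = 1, dotc b b = 1 & dotc a b = 0].

Lemma dotcE a b : dotc a b = \sum_i (a i 0)^* * b i 0.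
Proof. by rewrite /dotc mxE; apply: eq_bigr => i _; rewrite !mxE. Qed.

Lemma dotcC a b : dotc b a = (dotc a b)^*.
Proof.
rewrite !dotcE rmorph_sum; apply: eq_bigr => i _.
by rewrite rmorphM /= conjCK mulrC.
Qed.

Lemma dotcDr a b h : dotc a (b + h) = dotc a b + dotc a h.
Proof. by rewrite /dotc mulmxDr mxE. Qed.

Lemma dotcBr a b h : dotc a (b - h) = dotc a b - dotc a h.
Proof. by rewrite /dotc mulmxBr !mxE. Qed.

Lemma dotcZr c a b : dotc a (c *: b) = c * dotc a b.
Proof. by rewrite /dotc -scalemxAr mxE. Qed.

Lemma dotcDl a b h : dotc (a + b) h = dotc a h + dotc b h.
Proof. by rewrite (dotcC h) dotcDr rmorphD /= -!dotcC. Qed.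

Lemma dotcZl c a b : dotc (c *: a) b = c^* * dotc a b.
Proof. by rewrite (dotcC b) dotcZr rmorphM /= -dotcC. Qed.

Lemma dotc_ge0 a : 0 <= dotc a a.
Proof. by rewrite dotcE sumr_ge0 // => i _; rewrite mulrC mul_conjC_ge0. Qed.

Lemma dotc_eq0 a : (dotc a a == 0) = (a == 0).
Proof.
apply/idP/eqP => [|->]; last by rewrite dotcE big1 // => i _; rewrite mxE mulr0.
rewrite dotcE psumr_eq0 => [/allP a0|i _]; last by rewrite mulrC mul_conjC_ge0.
apply/matrixP => i j; rewrite ord1 mxE.
by have /implyP := a0 i (mem_index_enum i); rewrite mulrC mul_conjC_eq0 => /(_ isT)/eqP.
Qed.

Lemma vnorm_sqr a : ((vnorm a) ^+ 2)%:C%C = dotc a a.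
Proof.
rewrite /vnorm sqr_sqrtr ?sumr_ge0 // => [|i _]; last by rewrite addr_ge0 ?sqr_ge0.
rewrite dotcE rmorph_sum; apply: eq_bigr => i _ /=.
by rewrite -normCKC -add_Re2_Im2.
Qed.

Lemma vnorm_ge0 a : 0 <= vnorm a.
Proof. exact: sqrtr_ge0. Qed.

Lemma ler_vnorm a b : (vnorm a <= vnorm b) = (dotc a a <= dotc b b).
Proof. by rewrite -!vnorm_sqr lecR ler_sqr // nnegrE vnorm_ge0. Qed.

Lemma ltr_vnorm a b : (vnorm a < vnorm b) = (dotc a a < dotc b b).
Proof. by rewrite -!vnorm_sqr ltcR ltr_sqr // nnegrE vnorm_ge0. Qed.

Lemma vnorm_eq1 a : (vnorm a = 1) <-> (dotc a a = 1).
Proof.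
rewrite -vnorm_sqr; split=> [-> | a1]; first by rewrite expr1n.
have /eqP : vnorm a ^+ 2 = 1 ^+ 2 by apply: complexI; rewrite a1 expr1n.
by rewrite eqrXn2 ?vnorm_ge0 // => /eqP.
Qed.

Lemma pythagoras a b : dotc a b = 0 ->
  dotc (a + b) (a + b) = dotc a a + dotc b b.
Proof.
by move=> ab; rewrite !dotcDl !dotcDr (dotcC a b) ab conjC0 addr0 add0r.
Qed.

Lemma dotc_scale c a : dotc (c *: a) (c *: a) = c * c^* * dotc a a.
Proof. by rewrite dotcZl dotcZr mulrA (mulrC c^*). Qed.

Lemma dotc_proj_orth y h : dotc y y = 1 -> dotc y (h - dotc y h *: y) = 0.
Proof. by move=> y1; rewrite dotcBr dotcZr y1 mulr1 subrr. Qed.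

Lemma bessel_unit y h : dotc y y = 1 -> dotc y h * (dotc y h)^* <= dotc h h.
Proof.
move=> y1; have hE : h = dotc y h *: y + (h - dotc y h *: y) by rewrite addrC subrK.
rewrite [in X in _ <= X]hE pythagoras; last by rewrite dotcZl dotc_proj_orth ?mulr0.
by rewrite dotc_scale y1 mulr1 lerDl dotc_ge0.
Qed.

Lemma bessel_orthonormal y w h : orthonormal y w ->
  dotc y h * (dotc y h)^* + dotc w h * (dotc w h)^* <= dotc h h.
Proof.
case=> y1 w1 yw; set h' := h - dotc y h *: y.
have wh' : dotc w h' = dotc w h.
  by rewrite dotcBr dotcZr (dotcC y w) yw conjC0 mulr0 subr0.
have hE : h = dotc y h *: y + h' by rewrite addrC subrK.
rewrite [in X in _ <= X]hE pythagoras; last by rewrite dotcZl dotc_proj_orth ?mulr0.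
by rewrite dotc_scale y1 mulr1 lerD2l -wh' bessel_unit.
Qed.

Lemma dotc_orthonormal_comb a b c c' : orthonormal a b ->
  dotc (c *: a + c' *: b) (c *: a + c' *: b) = c * c^* + c' * c'^*.
Proof.
case=> a1 b1 ab; rewrite pythagoras; last by rewrite dotcZl dotcZr ab !mulr0.
by rewrite !dotc_scale a1 b1 !mulr1.
Qed.

Lemma dotc_eq0_sym {a b} : dotc a b = 0 -> dotc b a = 0.
Proof. by move=> ab; rewrite dotcC ab conjC0. Qed.

Lemma orthonormal_coord a b c c' : orthonormal a b ->
  dotc a (c *: a + c' *: b) = c /\ dotc b (c *: a + c' *: b) = c'.
Proof.
case=> a1 b1 ab; rewrite !dotcDr !dotcZr a1 b1 ab (dotcC a b) ab conjC0.
by rewrite !mulr0 !mulr1 addr0 add0r.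
Qed.

Lemma unit_scale_decomp a : a != 0 ->
  exists c a', [/\ 0 < c, dotc a' a' = 1 & a = c *: a'].
Proof.
move=> a0; have va : 0 < vnorm a.
  rewrite lt_def vnorm_ge0 andbT; apply: contraNneq a0 => va0.
  by rewrite -dotc_eq0 -vnorm_sqr va0 expr0n.
exists (vnorm a)%:C%C, ((vnorm a)^-1%:C%C *: a); split; first by rewrite ltcR.
  rewrite dotc_scale conj_Creal ?complex_real // -vnorm_sqr -!rmorphM /=.
  by rewrite -expr2 -exprMn mulVf ?gt_eqF // expr1n.
by rewrite scalerA -rmorphM /= mulfV ?gt_eqF // scale1r.
Qed.

Lemma exists_unit_orthogonal (ws : seq 'cV[C]_n) : (size ws < n)%N ->
  exists2 r, dotc r r = 1 & forall w, w \in ws -> dotc w r = 0.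
Proof.
move=> ws_lt; pose W := \matrix_(i < size ws) (ws`_i)^t*.
have [r0 r0_neq0 Wr0] : exists2 r0 : 'cV[C]_n, r0 != 0 & W *m r0 = 0.
  have K0 : cokermx W != 0.
    by rewrite cokermx_eq0 /row_full neq_ltn (leq_ltn_trans (rank_leq_row W)).
  have : ~~ [forall j, col j (cokermx W) == 0].
    apply: contra K0 => /forallP Kcol0; apply/eqP/matrixP => i j.
    by have /eqP/matrixP/(_ i 0) := Kcol0 j; rewrite !mxE.
  rewrite negb_forall => /existsP[j Kj0].
  by exists (col j (cokermx W)); rewrite // colE mulmxA mulmx_coker mul0mx.
have /unit_scale_decomp[c [r [c_gt0 r1 r0E]]] := r0_neq0.
exists r => // w w_ws; have i_lt : (index w ws < size ws)%N by rewrite index_mem.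
have /eqP : dotc w r0 = 0.
  have /matrixP/(_ (Ordinal i_lt) 0) := Wr0; rewrite !mxE => Wi0.
  rewrite -[X in _ = X]Wi0 dotcE -{1}(nth_index 0 w_ws).
  by apply: eq_bigr => l _; rewrite !mxE.
by rewrite r0E dotcZr mulf_eq0 gt_eqF //= => /eqP.
Qed.

Lemma gram_schmidt_step {y u} : dotc y y = 1 -> dotc u u = 1 ->
  u != dotc y u *: y ->
  exists s om, [/\ orthonormal y s, 0 < om, dotc s u = om &
                   dotc y u * (dotc y u)^* + om ^+ 2 = 1].
Proof.
move=> y1 u1; rewrite -subr_eq0; set w := u - _.
move=> /unit_scale_decomp[om [s [om_gt0 s1 wE]]].
have om_conj : om^* = om by rewrite geC0_conj // ltW.
have yw : dotc y w = 0 by rewrite dotc_proj_orth.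
have ys : dotc y s = 0.
  by apply/eqP; move: yw; rewrite wE dotcZr => /eqP; rewrite mulf_eq0 gt_eqF.
have uE : u = dotc y u *: y + w by rewrite addrC subrK.
exists s, om; split=> //.
  rewrite [in LHS]uE dotcDr dotcZr (dotcC y s) ys conjC0 mulr0 add0r.
  by rewrite wE dotcZr s1 mulr1.
rewrite -u1 [in RHS]uE pythagoras; last by rewrite dotcZl yw mulr0.
by rewrite !dotc_scale wE dotc_scale y1 s1 om_conj !mulr1 expr2.
Qed.

Lemma orthonormal_to_family {k} (w : 'I_k -> 'cV[C]_n) {P : {pred 'I_k}} {z} :
  dotc z z = 1 -> (#|P| < n.-1)%N ->
  exists2 r, orthonormal z r & forall j, j \in P -> dotc (w j) r = 0.
Proof.
move=> z1 P_lt; have [|r r1 r_orth] := exists_unit_orthogonal (z :: [seq w j | j in P]).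
  by rewrite /= size_image -ltn_predRL.
exists r => [|j Pj]; last by rewrite r_orth // inE fintype.image_f ?orbT.
by split=> //; rewrite r_orth ?mem_head.
Qed.

Lemma exists_not_parallel {k} (w : 'I_k -> 'cV[C]_n) y :
  (1 < \rank (colmat w))%N -> exists j, w j != dotc y (w j) *: y.
Proof.
move=> rank_gt1; apply/existsP; rewrite -negb_forall; apply: contraTN rank_gt1.
move=> /forallP w_par; rewrite -leqNgt.
have -> : colmat w = y *m \row_j dotc y (w j).
  apply/matrixP => a b; rewrite !mxE big_ord1 !mxE.
  by rewrite [in LHS](eqP (w_par b)) mxE mulrC.
exact: leq_trans (mxrankM_maxl _ _) (rank_leq_col y).
Qed.

End InnerProduct.

Lemma unit_dim_gt0 {R : realType} {n} {y : 'cV[R[i]]_n} : dotc y y = 1 -> (0 < n)%N.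
Proof.
case: n y => // y; rewrite flatmx0 /dotc mulmx0 mxE => /eqP.
by rewrite eq_sym oner_eq0.
Qed.

Section Operators.
Context {R : realType} {n : nat}.
Local Notation C := R[i].
Implicit Types (h x r y s : 'cV[C]_n) (M : 'M[C]_n).

Lemma rank1_mulmx x y h : x *m y^t* *m h = dotc y h *: x.
Proof.
by apply/matrixP => i j; rewrite (ord1 j) -mulmxA [LHS]mxE big_ord1 [RHS]mxE mulrC.
Qed.

Lemma sesqE y M h : sesq y M h = dotc y (M *m h).
Proof. by rewrite /sesq /dotc map_trmx mulmxA. Qed.

Lemma dotc_mulmx_bound M h : dotc h h = 1 ->
  dotc (M *m h) (M *m h) <= \sum_i (\sum_j `|M i j|) ^+ 2.
Proof.
move=> h1; rewrite dotcE; apply: ler_sum => i _.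
have h_le1 j : `|h j 0| <= 1.
  have : `|h j 0| ^+ 2 <= 1.
    rewrite -h1 dotcE (bigD1 j) //= normCK mulrC lerDl.
    by apply: sumr_ge0 => l _; rewrite mulrC mul_conjC_ge0.
  by rewrite expr_le1.
rewrite mulrC -normCK ler_sqr ?nnegrE ?sumr_ge0 // mxE.
apply: le_trans (ler_norm_sum _ _ _) _; apply: ler_sum => j _.
by rewrite normrM ler_piMr.
Qed.

Lemma opnorm_ge M h : vnorm h = 1 -> vnorm (M *m h) <= opnorm M.
Proof.
move=> h1; apply: ub_le_sup; last by exists h.
set K := \sum_i (\sum_j `|M i j|) ^+ 2.
exists (1 + complex.Re K) => _ [g /vnorm_eq1 g1 <-].
have := dotc_mulmx_bound M g g1; rewrite -vnorm_sqr lecE => /andP[_ /= MgK].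
have := vnorm_ge0 (M *m g); nra.
Qed.

Lemma opnorm_le M c : (0 < n)%N ->
  (forall h, vnorm h = 1 -> vnorm (M *m h) <= c) -> opnorm M <= c.
Proof.
move=> n_gt0 Mc; apply: ge_sup => [|_ [h h1 <-]]; last exact: Mc.
pose e : 'cV[C]_n := delta_mx (Ordinal n_gt0) 0.
exists (vnorm (M *m e)), e => //; apply/vnorm_eq1.
rewrite dotcE (bigD1 (Ordinal n_gt0)) //= big1 => [|i /negbTE i0].
  by rewrite !mxE eqxx conjC1 mulr1 addr0.
by rewrite !mxE i0 mulr0.
Qed.

Lemma Vspace_subZ k (v u : 'I_k -> 'cV[C]_n) M M' c :
  Vspace v u M -> Vspace v u M' -> Vspace v u (M - c *: M').
Proof.
move=> VM VM' j; rewrite sesqE mulmxBl -scalemxAl dotcBr dotcZr -!sesqE.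
by rewrite VM VM' mulr0 subr0.
Qed.

Lemma BJ_orth_rank1 x y M : dotc y y = 1 -> dotc x (M *m y) = 0 ->
  BJ_orth (x *m y^t* ) M.
Proof.
move=> y1 x_My mu; have n_gt0 := unit_dim_gt0 y1.
have /vnorm_eq1 y1' := y1.
have Ay : x *m y^t* *m y = x by rewrite rank1_mulmx y1 scale1r.
apply: le_trans _ (opnorm_ge _ _ y1'); rewrite mulmxDl -scalemxAl Ay.
apply: opnorm_le => // h /vnorm_eq1 h1.
rewrite rank1_mulmx ler_vnorm pythagoras; last by rewrite dotcZr x_My mulr0.
apply: (@le_trans _ _ (dotc x x)); last by rewrite lerDl dotc_ge0.
by rewrite dotc_scale ler_piMl ?dotc_ge0 // -h1 bessel_unit.
Qed.

Lemma rank1_decomp {A : 'M[C]_n} : \rank A = 1%N ->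
  exists kap x y, [/\ kap != 0, dotc x x = 1, dotc y y = 1 & A = kap *: (x *m y^t* )].
Proof.
move=> rA; have n_gt0 : (0 < n)%N by rewrite -rA rank_leq_row.
pose i0 := Ordinal n_gt0.
have pid1 : pid_mx (\rank A) = delta_mx i0 (0 : 'I_1) *m delta_mx 0 i0 :> 'M[C]_n.
  rewrite rA mul_delta_mx; apply/matrixP => i j; rewrite !mxE -!val_eqE /=.
  by case: i j => [[|i] ?] [[|j] ?]; rewrite ?andbF.
have adjZ c h : (c *: h)^t* = c^* *: h^t* by apply/matrixP => i j; rewrite !mxE rmorphM.
pose x0 := col_ebase A *m delta_mx i0 (0 : 'I_1).
pose y0 := (delta_mx (0 : 'I_1) i0 *m row_ebase A)^t*.
have AE : A = x0 *m y0^t*.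
  by rewrite /x0 /y0 trmxCK mulmxA -(mulmxA (col_ebase A)) -pid1 mulmx_ebase.
have A0 : A != 0 by rewrite -mxrank_eq0 rA.
have /unit_scale_decomp[c [x [c_gt0 x1 x0E]]] : x0 != 0.
  by apply: contraNneq A0 => x00; rewrite AE x00 mul0mx.
have /unit_scale_decomp[d [y [d_gt0 y1 y0E]]] : y0 != 0.
  apply: contraNneq A0 => y00.
  by rewrite AE y00 -(scale0r 0) adjZ conjC0 !scale0r mulmx0.
exists (c * d^* ), x, y; split=> //; first by rewrite mulf_neq0 ?conjC_eq0 ?gt_eqF.
by rewrite AE x0E y0E adjZ -scalemxAl -scalemxAr scalerA.
Qed.

(* The operator acting as the 2 x 2 matrix [[a, b], [c, d]] from the basis
   (y, s) to the basis (x, r) and as 0 on the orthogonal complement of y, s. *)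
Definition pairmx x r y s (a b c d : C) : 'M[C]_n :=
  a *: (x *m y^t* ) + b *: (x *m s^t* ) + c *: (r *m y^t* ) + d *: (r *m s^t* ).

Lemma pairmx_mulmx x r y s a b c d h : pairmx x r y s a b c d *m h =
  (a * dotc y h + b * dotc s h) *: x + (c * dotc y h + d * dotc s h) *: r.
Proof. by rewrite !mulmxDl -!scalemxAl !rank1_mulmx !scalerA !scalerDl !addrA. Qed.

Lemma sesq_pairmx x r y s a b c d w z : sesq w (pairmx x r y s a b c d) z =
  dotc w x * (a * dotc y z + b * dotc s z) + dotc w r * (c * dotc y z + d * dotc s z).
Proof. by rewrite sesqE pairmx_mulmx dotcDr !dotcZr mulrC (mulrC _ (dotc w r)). Qed.

Lemma pairmxDZ x r y s a b c d a' b' c' d' t :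
  pairmx x r y s a b c d + t *: pairmx x r y s a' b' c' d' =
  pairmx x r y s (a + t * a') (b + t * b') (c + t * c') (d + t * d').
Proof. by apply/matrixP => i j; rewrite !mxE; ring. Qed.

End Operators.

Section UnitaryBlock.
Context {R : realType} {n : nat}.
Local Notation C := R[i].
Context {x r y s : 'cV[C]_n} {al om : C}.
Hypotheses (xr : orthonormal x r) (ys : orthonormal y s).
Hypotheses (om_gt0 : 0 < om) (al_om : al * al^* + om ^+ 2 = 1).
Local Notation P := (pairmx x r y s).

Let om_conj : om^* = om. Proof. by rewrite geC0_conj // ltW. Qed.

Lemma opnorm_pairmx_unitary : opnorm (P al^* om om (- al)) <= 1.
Proof.
have [x1 _ _] := xr; apply: opnorm_le (unit_dim_gt0 x1) _ => h h1.
rewrite -h1 ler_vnorm pairmx_mulmx dotc_orthonormal_comb //.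
set p := dotc y h; set q := dotc s h.
have -> : (al^* * p + om * q) * (al^* * p + om * q)^* +
          (om * p + - al * q) * (om * p + - al * q)^* =
          (al * al^* + om ^+ 2) * (p * p^* + q * q^* ).
  by rewrite !rmorphD !rmorphM !rmorphN /= conjCK om_conj; ring.
by rewrite al_om mul1r bessel_orthonormal.
Qed.

Lemma opnorm_pairmx_gt1 : al != 0 -> 1 < opnorm (P 0 om om (- al)).
Proof.
move=> al0; set h := om *: y + (- al^* ) *: s.
have h1 : dotc h h = 1.
  by rewrite dotc_orthonormal_comb // om_conj rmorphN /= conjCK -al_om; ring.
have /vnorm_eq1 h1' := h1; apply: lt_le_trans (opnorm_ge _ _ h1').
rewrite -h1' ltr_vnorm pairmx_mulmx.
have [-> ->] : dotc y h = om /\ dotc s h = - al^* := orthonormal_coord _ _ _ _ ys.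
rewrite dotc_orthonormal_comb // h1.
have -> : om * om + - al * - al^* = 1 by rewrite mulrNN -expr2 addrC.
rewrite mul0r add0r conjC1 mulr1 ltrDr lt_def mul_conjC_ge0 mul_conjC_eq0 andbT.
by rewrite mulf_neq0 ?oppr_eq0 ?conjC_eq0 // gt_eqF.
Qed.

Lemma pairmx_not_left_symmetric {k} (v u : 'I_k -> 'cV[C]_n) kap :
  kap != 0 -> al != 0 -> Vspace v u (P al^* om om (- al)) ->
  ~ left_symmetric_rel (Vspace v u) (kap *: (x *m y^t* )).
Proof.
move=> kap0 al0 VC [VA LS]; set A := kap *: _ in VA LS.
set B := P 0 om om (- al); set t := al^* / kap.
have BAC : B + t *: A = P al^* om om (- al).
  have -> : A = P kap 0 0 0 by rewrite /pairmx !scale0r !addr0.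
  by rewrite pairmxDZ !mulr0 !addr0 add0r divfK.
have VB : Vspace v u B by rewrite -(addrK (t *: A) B) BAC; apply: Vspace_subZ.
have AB : BJ_orth A B.
  have [y1 _ ys0] := ys; rewrite /A scalemxAl; apply: BJ_orth_rank1 => //.
  rewrite dotcZl pairmx_mulmx y1 (dotcC y s) ys0 conjC0 !mulr0 mul0r !addr0 mulr1.
  by have [-> _] := orthonormal_coord _ _ 0 om xr; rewrite mulr0.
have := LS B VB AB t; rewrite BAC => /le_trans/(_ opnorm_pairmx_unitary).
by rewrite leNgt opnorm_pairmx_gt1.
Qed.

End UnitaryBlock.

Section RankOneCases.
Context {R : realType} {n k : nat}.
Local Notation C := R[i].
Context {v u : 'I_k -> 'cV[C]_n} {x y : 'cV[C]_n} {kap : C}.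
Hypotheses (k_lt_n : (k < n)%N) (x1 : dotc x x = 1) (y1 : dotc y y = 1).
Hypotheses (kap0 : kap != 0) (VA : Vspace v u (kap *: (x *m y^t* ))).
Local Notation LS := (left_symmetric_rel (Vspace v u) (kap *: (x *m y^t* ))).

Let xy_ann j : dotc (v j) x * dotc y (u j) = 0.
Proof.
apply/eqP; have /eqP := VA j.
by rewrite sesqE -scalemxAl rank1_mulmx !dotcZr mulf_eq0 (negbTE kap0) mulrC.
Qed.

Let vx_eq0 j : dotc y (u j) != 0 -> dotc (v j) x = 0.
Proof.
by move=> yu; apply/eqP; have /eqP := xy_ann j; rewrite mulf_eq0 (negbTE yu) orbF.
Qed.

Let yu_eq0 j : dotc (v j) x != 0 -> dotc y (u j) = 0.
Proof.
by move=> vx; apply/eqP; have /eqP := xy_ann j; rewrite mulf_eq0 (negbTE vx).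
Qed.

Lemma card_lt_of_notin {J : {pred 'I_k}} {a} : a \notin J -> (#|J| < n.-1)%N.
Proof.
move=> aJ; rewrite ltn_predRL; apply: leq_ltn_trans k_lt_n.
by have := max_card [predU1 a & J]; rewrite cardU1 aJ card_ord.
Qed.

Lemma not_left_symmetric_of_witness {r s} al om :
  orthonormal x r -> orthonormal y s -> 0 < om -> al != 0 -> al * al^* + om ^+ 2 = 1 ->
  (forall j, dotc (v j) x * (al^* * dotc y (u j) + om * dotc s (u j)) +
             dotc (v j) r * (om * dotc y (u j) + - al * dotc s (u j)) = 0) ->
  ~ LS.
Proof.
move=> xr ys om_gt0 al0 al_om witness.
by apply: (pairmx_not_left_symmetric xr ys om_gt0 al_om) => // j; rewrite sesq_pairmx.
Qed.

Lemma rank1_not_left_symmetric_split a b :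
  a != b -> dotc y (u a) = 0 -> dotc (v b) x = 0 -> ~ LS.
Proof.
move=> ab yua vbx; pose J := [pred j | (j == b) || (dotc y (u j) != 0)].
have aJ : a \notin J by rewrite inE (negbTE ab) yua eqxx.
have bJ : b \notin predC J by rewrite !inE eqxx.
have [r xr vr] := orthonormal_to_family v x1 (card_lt_of_notin aJ).
have [s ys us] := orthonormal_to_family u y1 (card_lt_of_notin bJ).
(* Any [al != 0] and [om > 0] with [|al|^2 + om^2 = 1] would do. *)
have c35 : (3%:R / 5%:R : C)^* = 3%:R / 5%:R by rewrite geC0_conj // divr_ge0 ?ler0n.
apply: (not_left_symmetric_of_witness (3%:R / 5%:R) (4%:R / 5%:R) xr ys).
- by rewrite divr_gt0 ?ltr0n.
- by rewrite mulf_neq0 ?invr_eq0 ?pnatr_eq0.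
- by rewrite c35; field.
move=> j; have [Jj|Jj] := boolP (j \in J).
  have vjx : dotc (v j) x = 0.
    by move: Jj; rewrite inE => /orP[/eqP -> | /vx_eq0].
  by rewrite vjx vr // !mul0r addr0.
have /andP[_ /negbNE/eqP yuj] : ~~ (j == b) && ~~ (dotc y (u j) != 0).
  by rewrite -negb_or.
by rewrite yuj (dotc_eq0_sym (us j _)) ?inE ?Jj // !mulr0 !addr0 !mulr0 addr0.
Qed.

Lemma rank1_not_left_symmetric_yu_neq0 (u1 : forall j, dotc (u j) (u j) = 1) :
  (1 < \rank (colmat u))%N -> (forall j, dotc y (u j) != 0) -> ~ LS.
Proof.
move=> ru yu0; have [j0 uj0] := exists_not_parallel u y ru.
have [s [om [ys om_gt0 su al_om]]] := gram_schmidt_step y1 (u1 j0) uj0.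
have j0J : j0 \notin predC1 j0 by rewrite !inE eqxx.
have [r xr vr] := orthonormal_to_family v x1 (card_lt_of_notin j0J).
apply: (not_left_symmetric_of_witness _ _ xr ys om_gt0 (yu0 j0) al_om) => j.
rewrite vx_eq0 // mul0r add0r; have [->|ne] := eqVneq j j0.
  by rewrite su mulNr (mulrC om) subrr mulr0.
by rewrite vr ?mul0r // !inE ne.
Qed.

Lemma rank1_not_left_symmetric_vx_neq0 (v1 : forall j, dotc (v j) (v j) = 1) :
  (1 < \rank (colmat v))%N -> (forall j, dotc (v j) x != 0) -> ~ LS.
Proof.
move=> rv vx0; have [j0 vj0] := exists_not_parallel v x rv.
have [r [om [xr om_gt0 rv0 al_om]]] := gram_schmidt_step x1 (v1 j0) vj0.
have j0J : j0 \notin predC1 j0 by rewrite !inE eqxx.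
have [s ys us] := orthonormal_to_family u y1 (card_lt_of_notin j0J).
have om_conj : om^* = om by rewrite geC0_conj // ltW.
apply: (not_left_symmetric_of_witness (dotc (v j0) x) _ xr ys om_gt0 (vx0 j0)).
  by rewrite (dotcC x) conjCK mulrC.
move=> j; rewrite yu_eq0 // !mulr0 !add0r; have [->|ne] := eqVneq j j0.
  by rewrite (dotcC r) rv0 om_conj; ring.
by rewrite (dotc_eq0_sym (us j _)) ?inE ?ne // !mulr0 addr0.
Qed.

Lemma rank1_not_left_symmetric :
  (forall j, dotc (v j) (v j) = 1) -> (forall j, dotc (u j) (u j) = 1) ->
  (1 < \rank (colmat v))%N -> (1 < \rank (colmat u))%N -> ~ LS.
Proof.
move=> v1 u1 rv ru.
have [a /eqP yua|yu0] := pickP (fun j => dotc y (u j) == 0); last first.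
  by apply: rank1_not_left_symmetric_yu_neq0 => // j; rewrite yu0.
have [b /eqP vbx|vx0] := pickP (fun j => dotc (v j) x == 0); last first.
  by apply: rank1_not_left_symmetric_vx_neq0 => // j; rewrite vx0.
case: (eqVneq a b) vbx => [<- vax|ab vbx].
  have [c ca] : exists c, c \in predC1 a.
    by apply/card_gt0P; rewrite cardC1 card_ord ltn_predRL (leq_trans rv) ?rank_leq_col.
  have [yuc|/vx_eq0 vcx] := eqVneq (dotc y (u c)) 0.
    exact: rank1_not_left_symmetric_split ca yuc vax.
  by apply: rank1_not_left_symmetric_split yua vcx; rewrite eq_sym.
exact: rank1_not_left_symmetric_split ab yua vbx.
Qed.

End RankOneCases.

Theorem lemma3p4 (R : realType) (n k : nat) (v u : 'I_k -> 'cV[R[i]]_n) :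
  (2 <= n)%N -> (k <= n.-1)%N ->
  (forall j, vnorm (v j) = 1) -> (forall j, vnorm (u j) = 1) ->
  (2 <= \rank (colmat v))%N -> (2 <= \rank (colmat u))%N ->
  ~ (exists A : 'M[R[i]]_n,
       \rank A = 1%N /\ left_symmetric_rel (Vspace v u) A).
Proof.
move=> n_ge2 k_le v1 u1 rv ru [A [rA LS]].
have k_lt_n : (k < n)%N by lia.
have [kap [x [y [kap0 x1 y1 AE]]]] := rank1_decomp rA; rewrite {}AE in LS.
have v1' j : dotc (v j) (v j) = 1 by apply/vnorm_eq1.
have u1' j : dotc (u j) (u j) = 1 by apply/vnorm_eq1.
exact: (rank1_not_left_symmetric k_lt_n x1 y1 kap0 LS.1 v1' u1' rv ru LS).
Qed.
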